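(* Let $V$ be a Majorana representation with identity $\mathbb 1$ satisfying axiom M2'. Let $x_1,\dots,x_k\in V$ be idempotents, $\lambda_1,\dots,\lambda_k\in\mathbb R$, and suppose $x=\sum_{i=1}^k\lambda_i x_i$ is also an idempotent. Then $l(x)=\sum_{i=1}^k \lambda_i\, l(x_i)$, where $l(v):=(v,v)$.
   Context: A transposition group $(G,T)$ is a finite group $G$ with a $G$-stable set $T$ of involutions generating $G$. A Majorana representation of $(G,T)$ is a quintuple $(G,T,V,\varphi,\psi)$ where $V$ is a commutative non-associative real algebra with a (positive definite) inner product $(\,,)$, $\varphi:G\to GL(V)$ is a representation with $\varphi(G)\le \mathrm{Aut}(V)$, and $\psi:T\to V\setminus\{0\}$ is injective with $\psi(t^g)=\psi(t)^{\varphi(g)}$, such that: (M1) $(u,v\cdot w)=(u\cdot v,w)$ for all $u,v,w$; (M2) $(u\cdot u,v\cdot v)\ge (u\cdot v,u\cdot v)$ for all $u,v$; (M3) elements of $\psi(T)$ (Majorana axes) are idempotents of length $1$; (M4) each Majorana axis $a$ has $\mathrm{ad}_a:u\mapsto a\cdot u$ diagonalizable with eigenvalues in $\{0,1,\frac1{4},\frac1{32}\}$; (M5) $1$ is a simple eigenvalue of each Majorana axis; (M6) for each axis $a$ the linear map $\tau(a)$ acting as $(-1)^{32\mu}$ on the $\mu$-eigenspace of $\mathrm{ad}_a$ is an algebra automorphism; (M7) for each axis $a$ the map $\sigma(a)$ on $C_V(\tau(a))$ acting as $(-1)^{4\mu}$ on the $\mu$-eigenspaces, $\mu\ne\frac1{32}$,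 preserves the product of $C_V(\tau(a))$; (M8) $\tau(\psi(t))=\varphi(t)$ for all $t\in T$. Axiom M2': the Norton inequality holds for all $u,v$, with equality precisely when $\mathrm{ad}_u$ and $\mathrm{ad}_v$ commute. *)

From HB Require Import structures.
From mathcomp Require Import all_boot all_order all_algebra all_fingroup.
From mathcomp Require Import reals.
Set Implicit Arguments. Unset Strict Implicit. Unset Printing Implicit Defensive.
Import Order.TTheory GRing.Theory Num.Theory.
Local Open Scope ring_scope.

Section Majorana.
Variable R : realType.
Variable V : lmodType R.

Definition lin_map (f : V -> V) : Prop :=
  forall (c : R) (u v : V), f (c *: u + v) = c *: f u + f v.

Definition comm_bilinear_product (mul : V -> V -> V) : Prop :=
  (forall u v, mul u v = mul v u) /\
  (forall (c : R) u v w, mul (c *: u + v) w = c *: mul u w + mul v w).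

Definition inner_product (ip : V -> V -> R) : Prop :=
  (forall u v, ip u v = ip v u) /\
  (forall (c : R) u v w, ip (c *: u + v) w = c * ip u w + ip v w) /\
  (forall v, v != 0 -> 0 < ip v v).

Definition algebra_aut (mul : V -> V -> V) (f : V -> V) : Prop :=
  lin_map f /\ bijective f /\ (forall u v, f (mul u v) = mul (f u) (f v)).

Definition eig_quarter : R := 4%:R^-1.
Definition eig_32 : R := 32%:R^-1.

Definition eigv (mul : V -> V -> V) (a : V) (mu : R) (v : V) : Prop :=
  mul a v = mu *: v.

Definition M4_axis (mul : V -> V -> V) (a : V) : Prop :=
  forall v, exists v0 v1 v4 v32,
    [/\ v = v0 + v1 + v4 + v32, eigv mul a 0 v0, eigv mul a 1 v1,
        eigv mul a eig_quarter v4 & eigv mul a eig_32 v32].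

Definition M5_axis (mul : V -> V -> V) (a : V) : Prop :=
  forall v, eigv mul a 1 v -> exists c : R, v = c *: a.

(* f is tau(a): linear, acting as (-1)^(32 mu) on the mu-eigenspaces *)
Definition is_tau (mul : V -> V -> V) (a : V) (f : V -> V) : Prop :=
  lin_map f /\
  (forall v, (eigv mul a 0 v \/ eigv mul a 1 v \/ eigv mul a eig_quarter v) ->
     f v = v) /\
  (forall v, eigv mul a eig_32 v -> f v = - v).

Definition in_CV_tau (mul : V -> V -> V) (a : V) (u : V) : Prop :=
  forall f, is_tau mul a f -> f u = u.

(* f is (a linear extension of) sigma(a): acts as (-1)^(4 mu) on the
   mu-eigenspaces, mu in {0,1,1/4} *)
Definition is_sigma (mul : V -> V -> V) (a : V) (f : V -> V) : Prop :=
  lin_map f /\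
  (forall v, (eigv mul a 0 v \/ eigv mul a 1 v) -> f v = v) /\
  (forall v, eigv mul a eig_quarter v -> f v = - v).

Definition M6_axis (mul : V -> V -> V) (a : V) : Prop :=
  forall f, is_tau mul a f -> algebra_aut mul f.

Definition M7_axis (mul : V -> V -> V) (a : V) : Prop :=
  forall f, is_sigma mul a f ->
  forall u w, in_CV_tau mul a u -> in_CV_tau mul a w ->
    f (mul u w) = mul (f u) (f w).

Definition ad_commute (mul : V -> V -> V) (u v : V) : Prop :=
  forall w, mul u (mul v w) = mul v (mul u w).

Definition axiom_M2' (mul : V -> V -> V) (ip : V -> V -> R) : Prop :=
  forall u v, ip (mul u v) (mul u v) <= ip (mul u u) (mul v v) /\
    (ip (mul u u) (mul v v) = ip (mul u v) (mul u v) <-> ad_commute mul u v).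

(* Majorana representation (G,T,V,phi,psi), where V carries product mul and
   inner product ip; phi is a right action: phi (g*h) = phi h \o phi g,
   matching psi(t^g) = psi(t)^phi(g). *)
Definition majorana_rep (gT : finGroupType) (G : {group gT}) (T : {set gT})
    (mul : V -> V -> V) (ip : V -> V -> R)
    (phi : gT -> V -> V) (psi : gT -> V) : Prop :=
  (* (G,T) transposition group *)
  [/\ T \subset G,
      (forall t, t \in T -> t != 1%g /\ (t ^+ 2 = 1)%g),
      (forall t g, t \in T -> g \in G -> (t ^ g)%g \in T)
    & (<<T>>)%g = G :> {set gT}] /\
  comm_bilinear_product mul /\ inner_product ip /\
  (forall g, g \in G -> algebra_aut mul (phi g)) /\
  (forall v, phi 1%g v = v) /\
  (forall g h v, g \in G -> h \in G -> phi (g * h)%g v = phi h (phi g v)) /\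
  {in T &, injective psi} /\
  (forall t, t \in T -> psi t != 0) /\
  (forall t g, t \in T -> g \in G -> psi (t ^ g)%g = phi g (psi t)) /\
  (forall u v w, ip u (mul v w) = ip (mul u v) w) /\
  (forall u v, ip (mul u v) (mul u v) <= ip (mul u u) (mul v v)) /\
  (forall t, t \in T -> mul (psi t) (psi t) = psi t /\ ip (psi t) (psi t) = 1) /\
  (forall t, t \in T -> M4_axis mul (psi t)) /\
  (forall t, t \in T -> M5_axis mul (psi t)) /\
  (forall t, t \in T -> M6_axis mul (psi t)) /\
  (forall t, t \in T -> M7_axis mul (psi t)) /\
  (forall t, t \in T -> is_tau mul (psi t) (phi t)).

End Majorana.

(* By associativity of the form (M1), an idempotent v has
   (v, v) = (1 v, v) = (1, v v) = (1, v), so on idempotents the length agrees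
   with the linear functional (1, -); linearity then gives the claim. *)
From HB Require Import structures.
From mathcomp Require Import all_boot all_order all_algebra all_fingroup.
From mathcomp Require Import reals.
Set Implicit Arguments. Unset Strict Implicit. Unset Printing Implicit Defensive.
Import Order.TTheory GRing.Theory Num.Theory.
Local Open Scope ring_scope.

Lemma idempotent_length_unit (R : Type) (V : Type)
    (mul : V -> V -> V) (ip : V -> V -> R) (one v : V) :
  (forall u v w, ip u (mul v w) = ip (mul u v) w) ->
  (forall v, mul one v = v) ->
  mul v v = v -> ip v v = ip one v.
Proof. by move=> ipA mul1 vv; rewrite -[in RHS]vv ipA mul1. Qed.

Lemma additive_linear_combination (R : pzRingType) (V : lmodType R)
    (f : V -> R) (I : Type) (r : seq I) (lam : I -> R) (x : I -> V) :
  (forall c u v, f (c *: u + v) = c * f u + f v) ->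
  f (\sum_(i <- r) lam i *: x i) = \sum_(i <- r) lam i * f (x i).
Proof.
move=> fL.
have f0 : f 0 = 0.
  apply: (addrI (f 0)); rewrite addr0 -{1}(mul1r (f 0)) -fL.
  by rewrite scale1r addr0.
have fD u v : f (u + v) = f u + f v by have := fL 1 u v; rewrite scale1r mul1r.
rewrite (big_morph f fD f0); apply: eq_bigr => i _.
by rewrite -[lam i *: x i]addr0 fL f0 addr0.
Qed.

Theorem mainTheorem3 (R : realType) (V : lmodType R)
    (gT : finGroupType) (G : {group gT}) (T : {set gT})
    (mul : V -> V -> V) (ip : V -> V -> R)
    (phi : gT -> V -> V) (psi : gT -> V)
    (one : V) (k : nat) (x : 'I_k -> V) (lam : 'I_k -> R) :
  majorana_rep G T mul ip phi psi ->
  (forall v, mul one v = v) ->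
  axiom_M2' mul ip ->
  (forall i, mul (x i) (x i) = x i) ->
  mul (\sum_(i < k) lam i *: x i) (\sum_(i < k) lam i *: x i)
    = \sum_(i < k) lam i *: x i ->
  ip (\sum_(i < k) lam i *: x i) (\sum_(i < k) lam i *: x i)
    = \sum_(i < k) lam i * ip (x i) (x i).
Proof.
move=> [_ [_ [[ipC [ipL _]] [_ [_ [_ [_ [_ [_ [ipA _]]]]]]]]]] mul1 _ xx sx.
have lengthE v : mul v v = v -> ip v v = ip v one.
  by move=> vv; rewrite (idempotent_length_unit ipA mul1 vv) ipC.
rewrite lengthE // (additive_linear_combination _ _ _ (fun c u v => ipL c u v one)).
by apply: eq_bigr => i _; rewrite lengthE.
Qed.
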